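(* Let $1\le r\le s\le t$ and let $u=ABCd$, $v=A'B'C'd'$ be vertices of $E3C(r,s,t)$ with $A\ne A'$, $B\ne B'$, $C\ne C'$ and $d=d'$ (any $d\in\{0,1,2\}$). Then there exist $2r+2$ pairwise internally disjoint $u$–$v$ paths in $E3C(r,s,t)$, each of length at most $r+s+t+4$.
   Context: The exchanged 3-ary $n$-cube $E3C(r,s,t)$ ($r,s,t\ge1$, $n=r+s+t+1$): vertices are strings written $x=ABCd$ with $A\in\{0,1,2\}^r$, $B\in\{0,1,2\}^s$, $C\in\{0,1,2\}^t$, $d\in\{0,1,2\}$. Two distinct vertices $x=ABCd$, $y=A'B'C'd'$ are adjacent iff one of: (E0) $A=A',B=B',C=C'$ and $d\ne d'$; (E1) $d=d'=0$, $A=A'$, $B=B'$ and $C,C'$ differ in exactly one position; (E2) $d=d'=1$, $A=A'$, $C=C'$ and $B,B'$ differ in exactly one position; (E3) $d=d'=2$, $B=B'$, $C=C'$ and $A,A'$ differ in exactly one position. Paths are internally disjoint if they share no vertices other than their endpoints; length = number of edges. *)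

From mathcomp Require Import all_boot.
Set Implicit Arguments. Unset Strict Implicit. Unset Printing Implicit Defensive.

Definition E3Cvert (r s t : nat) : finType :=
  (r.-tuple 'I_3 * s.-tuple 'I_3 * t.-tuple 'I_3 * 'I_3)%type.

Definition vA {r s t} (x : E3Cvert r s t) : r.-tuple 'I_3 := x.1.1.1.
Definition vB {r s t} (x : E3Cvert r s t) : s.-tuple 'I_3 := x.1.1.2.
Definition vC {r s t} (x : E3Cvert r s t) : t.-tuple 'I_3 := x.1.2.
Definition vd {r s t} (x : E3Cvert r s t) : 'I_3 := x.2.

Definition hdist {n} (a b : n.-tuple 'I_3) : nat :=
  #|[set i : 'I_n | tnth a i != tnth b i]|.

Definition i0 : 'I_3 := @Ordinal 3 0 isT.
Definition i1 : 'I_3 := @Ordinal 3 1 isT.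
Definition i2 : 'I_3 := @Ordinal 3 2 isT.

Definition E3Cadj (r s t : nat) : rel (E3Cvert r s t) := fun x y =>
  [|| [&& vA x == vA y, vB x == vB y, vC x == vC y & vd x != vd y],
      [&& vd x == i0, vd y == i0, vA x == vA y, vB x == vB y & hdist (vC x) (vC y) == 1],
      [&& vd x == i1, vd y == i1, vA x == vA y, vC x == vC y & hdist (vB x) (vB y) == 1]
    | [&& vd x == i2, vd y == i2, vB x == vB y, vC x == vC y & hdist (vA x) (vA y) == 1]].

(* A u-v path is represented by the sequence p of vertices after u, so the
   path is u :: p; it is a simple path ending at v. *)
Definition is_path {r s t} (u v : E3Cvert r s t) (p : seq (E3Cvert r s t)) : bool :=
  [&& path (@E3Cadj r s t) u p, last u p == v & uniq (u :: p)].

Definition interior {r s t} (u : E3Cvert r s t) (p : seq (E3Cvert r s t))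
  : seq (E3Cvert r s t) := behead (belast u p).
(* the length (number of edges) of the path u :: p is size p *)

From mathcomp Require Import all_boot zify.
Set Implicit Arguments. Unset Strict Implicit. Unset Printing Implicit Defensive.

(* Exchanging two blocks together with the corresponding two values of the
   last digit maps E3C(t,s,r) and E3C(s,r,t) isomorphically onto E3C(r,s,t),
   so we may assume d = 2: u and v lie in the layer of E3C(p,q,w) where the
   block A, of length p >= r, moves.
   Every path changes layer by E0-edges and, inside a layer, corrects the
   active block one coordinate at a time.  For each position j < r and each of
   the two values y <> A_j, one path first sets A_j := y, then corrects C
   (layer 0), B (layer 1) and finally A (layer 2) in the cyclic order
   j+1, ..., p-1, 0, ..., j; since A_j is corrected last, two such paths can
   only meet at v.  Two more paths correct the blocks in the orders B, A, C and
   C, A, B -- or C, B, A when A and A' differ in a single coordinate, for then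
   some tagged A equals A'. *)

Section HammingWalk.
Variable n : nat.
Implicit Types (a b x : n.-tuple 'I_3) (o : seq 'I_n).

Definition tset a (i : 'I_n) (y : 'I_3) : n.-tuple 'I_3 :=
  [tuple if k == i then y else tnth a k | k < n].

Definition tmerge a b (S : seq 'I_n) : n.-tuple 'I_3 :=
  [tuple if k \in S then tnth b k else tnth a k | k < n].

Fixpoint hwalk a b o : seq (n.-tuple 'I_3) :=
  if o is i :: o' then
    if tnth a i == tnth b i then hwalk a b o'
    else tset a i (tnth b i) :: hwalk (tset a i (tnth b i)) b o'
  else [::].

Lemma tnth_tset a i y k : tnth (tset a i y) k = if k == i then y else tnth a k.
Proof. by rewrite tnth_mktuple. Qed.

Lemma tnth_tmerge a b S k :
  tnth (tmerge a b S) k = if k \in S then tnth b k else tnth a k.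
Proof. by rewrite tnth_mktuple. Qed.

Lemma tmerge_nil a b : tmerge a b [::] = a.
Proof. by apply: eq_from_tnth => k; rewrite tnth_tmerge. Qed.

Lemma tuple_neqP a b : a != b -> exists i, tnth a i != tnth b i.
Proof.
move=> neq_ab; have : ~~ [forall i, tnth a i == tnth b i].
  by apply: contra neq_ab => /forallP eq_ab; apply/eqP/eq_from_tnth => i; apply/eqP.
by rewrite negb_forall => /existsP.
Qed.

Lemma hdistxx a : hdist a a = 0.
Proof. by apply/eqP; rewrite cards_eq0; apply/eqP/setP => k; rewrite !inE eqxx. Qed.

Lemma hdist_eq0 a b : hdist a b = 0 -> a = b.
Proof.
move/eqP; rewrite cards_eq0 => /eqP diff0; apply: eq_from_tnth => i.
by apply/eqP/negPn/negP => neq_i; move: (in_set0 i); rewrite -diff0 inE neq_i.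
Qed.

Lemma hdist_tset a i y : tnth a i != y -> hdist a (tset a i y) = 1.
Proof.
move=> neq_y; rewrite /hdist (_ : [set _ | _] = [set i]) ?cards1 //.
apply/setP => k; rewrite !inE tnth_tset.
by case: (k =P i) => [->|_]; rewrite ?neq_y ?eqxx.
Qed.

Lemma hdist_tset_lt a b i :
  tnth a i != tnth b i -> hdist (tset a i (tnth b i)) b < hdist a b.
Proof.
move=> neq_i; apply: proper_card; apply/properP; split.
  by apply/subsetP => k; rewrite !inE tnth_tset; case: (k =P i) => [->|]; rewrite ?eqxx.
by exists i; rewrite !inE ?tnth_tset ?eqxx.
Qed.

Lemma hwalk_path a b o : path (fun x y => hdist x y == 1) a (hwalk a b o).
Proof.
elim: o a => //= i o IHo a; case: ifPn => // neq_i.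
by rewrite /= hdist_tset ?IHo.
Qed.

Lemma last_hwalk a b o :
  (forall i, tnth a i != tnth b i -> i \in o) -> last a (hwalk a b o) = b.
Proof.
elim: o a => [|i o IHo] a /= cover.
  by apply: eq_from_tnth => k; apply/eqP/negPn/negP => /cover.
case: ifPn => [eq_i|neq_i]; apply: IHo => k.
  move=> neq_k; have /predU1P [eq_ki|//] := cover k neq_k.
  by move: neq_k; rewrite eq_ki eq_i.
rewrite tnth_tset; case: (k =P i) => [->|ne_ki neq_k]; first by rewrite eqxx.
by have /predU1P [/ne_ki|] := cover k neq_k.
Qed.

Lemma size_hwalk a b o : size (hwalk a b o) <= size o.
Proof.
by elim: o a => //= i o IHo a; case: ifP => _ /=; rewrite ?ltnS ?IHo ?(leq_trans (IHo _)).
Qed.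

Lemma hwalk_hdist_lt a b o x : x \in hwalk a b o -> hdist x b < hdist a b.
Proof.
elim: o a => //= i o IHo a; case: ifPn => [_|neq_i]; first exact: IHo.
have lt_ab := hdist_tset_lt neq_i.
by rewrite inE => /predU1P [->|/IHo/ltn_trans]; last apply.
Qed.

Lemma hwalk_uniq a b o : uniq (a :: hwalk a b o).
Proof.
elim: o a => //= i o IHo a; case: ifPn => //= neq_i.
rewrite IHo andbT inE negb_or; have lt_ab := hdist_tset_lt neq_i.
apply/andP; split; first by apply: contraTneq lt_ab => <-; rewrite ltnn.
by apply/negP => /hwalk_hdist_lt lt_a; have := ltn_trans lt_a lt_ab; rewrite ltnn.
Qed.

Lemma hwalk_hdist1 a b o x : hdist a b = 1 -> x \in hwalk a b o -> x = b.
Proof. by move=> dist1 /hwalk_hdist_lt; rewrite dist1 ltnS leqn0 => /eqP/hdist_eq0. Qed.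

Lemma mem_hwalk a b o x :
  x \in a :: hwalk a b o -> exists m, x = tmerge a b (take m o).
Proof.
elim: o a => [|i o IHo] a /=.
  by rewrite inE => /eqP ->; exists 0; rewrite tmerge_nil.
case: ifPn => [eq_i|neq_i].
  case/IHo => m ->; exists m.+1; apply: eq_from_tnth => k; rewrite !tnth_tmerge /= inE.
  by case: eqP => // ->; case: ifP; rewrite // (eqP eq_i).
rewrite inE => /predU1P [->|/IHo [m ->]]; first by exists 0; rewrite tmerge_nil.
exists m.+1; apply: eq_from_tnth => k; rewrite !tnth_tmerge /= inE tnth_tset.
by case: eqP => // ->; case: ifP.
Qed.

End HammingWalk.

Lemma modn_ltdouble p x : x < p.*2 -> x %% p = if x < p then x else x - p.
Proof.
move=> lt_x; case: ltnP => [/modn_small //|le_px].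
by rewrite -{1}(subnK le_px) modnDr modn_small //; lia.
Qed.

Section CyclicOrder.
Variable p : nat.

(* [cyc_order j] lists the positions j+1, j+2, ..., j (mod p), ending with [j];
   [cyc_rank j i] is the index of [i] in it. *)
Definition cyc_rank (j i : nat) : nat := if j < i then i - j.+1 else i + p - j.+1.

Lemma cyc_rank_shift (j : 'I_p) c : c < p -> cyc_rank j ((j.+1 + c) %% p) = c.
Proof.
case: j => j lt_j /= lt_c; rewrite /cyc_rank modn_ltdouble; last lia.
by case: (ltnP (j.+1 + c) p) => ?; case: ifP => ?; lia.
Qed.

Lemma cyc_rankK (j i : 'I_p) : (j.+1 + cyc_rank j i) %% p = i.
Proof.
case: j i => j lt_j [i lt_i]; rewrite /cyc_rank /=.
by case: ifP => ?; rewrite modn_ltdouble; try lia; case: ifP => ?; lia.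
Qed.

Lemma cyc_rank_lt (j i : 'I_p) : cyc_rank j i < p.
Proof. by case: j i => j ? [i ?]; rewrite /cyc_rank /=; case: ifP => ?; lia. Qed.

Lemma cyc_rank_max (j i : 'I_p) : cyc_rank j i <= cyc_rank j j.
Proof. by case: j i => j ? [i ?]; rewrite /cyc_rank /= ltnn; case: ifP => ?; lia. Qed.

Lemma cyc_rank_rotate (j j' i : 'I_p) : j != j' ->
  cyc_rank j j' < cyc_rank j i -> cyc_rank j' i <= cyc_rank j' j.
Proof.
case: j j' i => j ? [j' ?] [i ?]; rewrite -val_eqE /cyc_rank /= => /eqP ?.
by repeat case: ifP => ?; lia.
Qed.

Variable p_gt0 : 0 < p.

Definition cyc_order (j : 'I_p) : seq 'I_p :=
  [seq Ordinal (ltn_pmod (j.+1 + c) p_gt0) | c <- iota 0 p].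

Lemma size_cyc_order j : size (cyc_order j) = p.
Proof. by rewrite size_map size_iota. Qed.

Lemma mem_take_cyc_order j m i : (i \in take m (cyc_order j)) = (cyc_rank j i < m).
Proof.
rewrite /cyc_order -map_take take_iota; apply/mapP/idP => [[c]|lt_im].
  rewrite mem_iota add0n => /andP [_ lt_c] ->; rewrite /= cyc_rank_shift; lia.
exists (cyc_rank j i); last exact/val_inj/esym/cyc_rankK.
by rewrite mem_iota add0n leq_min lt_im cyc_rank_lt.
Qed.

Lemma mem_cyc_order j i : i \in cyc_order j.
Proof.
by rewrite -(take_size (cyc_order j)) mem_take_cyc_order size_cyc_order cyc_rank_lt.
Qed.

End CyclicOrder.

Definition shift3 (x : 'I_3) (b : bool) : 'I_3 := Ordinal (ltn_pmod (x + b.+1) (isT : 0 < 3)).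

Lemma shift3_neq x b : shift3 x b != x.
Proof. by case: x => [[|[|[|?]]] ?] //; case: b. Qed.

Lemma shift3_inj x : injective (shift3 x).
Proof. by case: x => [[|[|[|?]]] ?] // [] [] /(congr1 val). Qed.

Definition disjoint_paths r s t (u v : E3Cvert r s t) (N bound : nat) : Prop :=
  exists P : 'I_N -> seq (E3Cvert r s t),
    (forall i, is_path u v (P i) /\ size (P i) <= bound) /\
    (forall i j, i != j -> forall x, x \in interior u (P i) -> x \notin interior u (P j)).

Lemma mem_interior r s t (u v x : E3Cvert r s t) P :
  is_path u v P -> x \in interior u P -> x \in P /\ x <> v.
Proof.
case/and3P => _ /eqP last_P; rewrite /interior; case: P last_P => // y P last_P.
case/andP => _ uniq_P /= x_in.
have /andP [v_notin _] : (v \notin belast y P) && uniq (belast y P).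
  by rewrite -rcons_uniq -last_P -lastI.
by split; [exact: mem_belast x_in | move=> eq_xv; rewrite -eq_xv x_in in v_notin].
Qed.

Lemma disjoint_pathsP r s t (u v : E3Cvert r s t) N bound (P : 'I_N -> seq (E3Cvert r s t)) :
  (forall i, is_path u v (P i) /\ size (P i) <= bound) ->
  (forall (i j : 'I_N) x, i < j -> x \in P i -> x \in P j -> x <> v -> False) ->
  disjoint_paths u v N bound.
Proof.
move=> P_ok P_disj; exists P; split => // i j ne_ij x x_i; apply/negP => x_j.
have [{}x_i ne_xv] := mem_interior (proj1 (P_ok i)) x_i.
have [{}x_j _] := mem_interior (proj1 (P_ok j)) x_j.
by case: (ltngtP i j) ne_ij => [lt_ij _|lt_ji _|/val_inj ->]; [apply: P_disj lt_ij x_i x_j ne_xv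
  | apply: P_disj lt_ji x_j x_i ne_xv | rewrite eqxx].
Qed.

Lemma disjoint_paths_map r s t r' s' t' (f : E3Cvert r s t -> E3Cvert r' s' t') u v N bound :
  injective f -> {homo f : x y / E3Cadj x y} ->
  disjoint_paths u v N bound -> disjoint_paths (f u) (f v) N bound.
Proof.
move=> f_inj f_adj [P [P_ok P_disj]]; exists (fun i => map f (P i)); split.
  move=> i; have [/and3P [P_path /eqP P_last P_uniq] P_size] := P_ok i.
  rewrite size_map; split => //; apply/and3P; split.
  - by rewrite path_map; apply: sub_path P_path => x y /f_adj.
  - by rewrite last_map P_last.
  - by rewrite -map_cons map_inj_uniq.
have interior_map i : interior (f u) (map f (P i)) = map f (interior u (P i)).
  by rewrite /interior belast_map behead_map.
move=> i j ne_ij x; rewrite !interior_map => /mapP [y y_in ->].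
by rewrite (mem_map f_inj); exact: P_disj ne_ij _ y_in.
Qed.

Lemma disjoint_paths_le r s t (u v : E3Cvert r s t) N bound bound' :
  bound <= bound' -> disjoint_paths u v N bound -> disjoint_paths u v N bound'.
Proof.
move=> le_b [P [P_ok P_disj]]; exists P; split => // i.
by have [P_path P_size] := P_ok i; split => //; apply: leq_trans P_size le_b.
Qed.

Section Walks.
Variables (p q w : nat).
Implicit Types (a : p.-tuple 'I_3) (b : q.-tuple 'I_3) (c : w.-tuple 'I_3).
Local Notation adj := (@E3Cadj p q w).

Lemma E3Cadj_layer a b c d d' : d != d' -> adj (a, b, c, d) (a, b, c, d').
Proof. by move=> ne_d; rewrite /E3Cadj /vA /vB /vC /vd /= !eqxx ne_d. Qed.

Lemma E3Cadj_A a a' b c : hdist a a' == 1 -> adj (a, b, c, i2) (a', b, c, i2).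
Proof. by move=> dist1; rewrite /E3Cadj /vA /vB /vC /vd /= !eqxx dist1 !orbT. Qed.

Lemma E3Cadj_B a b b' c : hdist b b' == 1 -> adj (a, b, c, i1) (a, b', c, i1).
Proof. by move=> dist1; rewrite /E3Cadj /vA /vB /vC /vd /= !eqxx dist1 !orbT. Qed.

Lemma E3Cadj_C a b c c' : hdist c c' == 1 -> adj (a, b, c, i0) (a, b, c', i0).
Proof. by move=> dist1; rewrite /E3Cadj /vA /vB /vC /vd /= !eqxx dist1 !orbT. Qed.

Definition walk_to (x : E3Cvert p q w) (s : seq (E3Cvert p q w)) y :=
  path adj x s && (last x s == y).

Lemma walk_to_cat x y z s1 s2 : walk_to x s1 y -> walk_to y s2 z -> walk_to x (s1 ++ s2) z.
Proof.
case/andP => walk1 /eqP last1 /andP [walk2 last2].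
by rewrite /walk_to cat_path last_cat last1 walk1 walk2.
Qed.

Lemma walk_to1 x y : adj x y -> walk_to x [:: y] y.
Proof. by move=> adj_xy; rewrite /walk_to /= adj_xy eqxx. Qed.

Lemma walk_to_hwalk n (f : n.-tuple 'I_3 -> E3Cvert p q w) x (e e' : n.-tuple 'I_3) o :
  adj x (f e) -> (forall y z, hdist y z == 1 -> adj (f y) (f z)) ->
  (forall i, tnth e i != tnth e' i -> i \in o) ->
  walk_to x (map f (e :: hwalk e e' o)) (f e').
Proof.
move=> adj_x adj_f cover; rewrite /walk_to /= adj_x path_map last_map last_hwalk // eqxx.
by rewrite andbT; apply: sub_path (hwalk_path e e' o) => y z /adj_f.
Qed.

Lemma walk_to_is_path x y s : walk_to x s y -> uniq (x :: s) -> is_path x y s.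
Proof. by case/andP => ? ? ?; apply/and3P. Qed.

End Walks.

Lemma uniq_catI (T : eqType) (s1 s2 : seq T) :
  uniq s1 -> uniq s2 -> (forall x, x \in s1 -> x \in s2 -> False) -> uniq (s1 ++ s2).
Proof.
move=> ? ? disj; rewrite cat_uniq; apply/and3P; split => //.
by apply/hasPn => x in2; apply/negP => /disj/(_ in2).
Qed.

(* [congruence] only sees that the layers differ once [i0], [i1], [i2] are unfolded. *)
Ltac distinct_vertices := unfold i0, i1, i2 in *; congruence.

Section LayerTwo.
Variables (p q w : nat) (p_gt0 : 0 < p).
Variables (A A' : p.-tuple 'I_3) (B B' : q.-tuple 'I_3) (C C' : w.-tuple 'I_3).
Hypotheses (neqA : A <> A') (neqB : B <> B') (neqC : C <> C').
Local Notation V := (E3Cvert p q w).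
Local Notation adj := (@E3Cadj p q w).
Local Notation u := ((A, B, C, i2) : V).
Local Notation v := ((A', B', C', i2) : V).

Definition segA (o : seq 'I_p) e (b : q.-tuple 'I_3) (c : w.-tuple 'I_3) : seq V :=
  [seq (a, b, c, i2) | a <- e :: hwalk e A' o].
Definition segB (a : p.-tuple 'I_3) (c : w.-tuple 'I_3) : seq V :=
  [seq (a, b, c, i1) | b <- B :: hwalk B B' (enum 'I_q)].
Definition segC (a : p.-tuple 'I_3) (b : q.-tuple 'I_3) : seq V :=
  [seq (a, b, c, i0) | c <- C :: hwalk C C' (enum 'I_w)].

Lemma walk_to_segA o e b c x :
  (forall i, i \in o) -> adj x (e, b, c, i2) -> walk_to x (segA o e b c) (A', b, c, i2).
Proof. by move=> cover adj_x; apply: walk_to_hwalk => // *; apply: E3Cadj_A. Qed.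

Lemma walk_to_segB a c x : adj x (a, B, c, i1) -> walk_to x (segB a c) (a, B', c, i1).
Proof.
by move=> adj_x; apply: walk_to_hwalk => // [*|i _]; [exact: E3Cadj_B | exact: mem_enum].
Qed.

Lemma walk_to_segC a b x : adj x (a, b, C, i0) -> walk_to x (segC a b) (a, b, C', i0).
Proof.
by move=> adj_x; apply: walk_to_hwalk => // [*|i _]; [exact: E3Cadj_C | exact: mem_enum].
Qed.

Lemma segA_uniq o e b c : uniq (segA o e b c).
Proof. by rewrite /segA map_inj_uniq ?hwalk_uniq // => ? ? []. Qed.

Lemma segB_uniq a c : uniq (segB a c).
Proof. by rewrite /segB map_inj_uniq ?hwalk_uniq // => ? ? []. Qed.

Lemma segC_uniq a b : uniq (segC a b).
Proof. by rewrite /segC map_inj_uniq ?hwalk_uniq // => ? ? []. Qed.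

Lemma size_segA o e b c : size (segA o e b c) <= (size o).+1.
Proof. by rewrite /segA size_map /= ltnS size_hwalk. Qed.

Lemma size_segB a c : size (segB a c) <= q.+1.
Proof. by rewrite /segB size_map /= ltnS -[q in _ <= q]size_enum_ord size_hwalk. Qed.

Lemma size_segC a b : size (segC a b) <= w.+1.
Proof. by rewrite /segC size_map /= ltnS -[w in _ <= w]size_enum_ord size_hwalk. Qed.

Lemma mem_segA o e b c x :
  x \in segA o e b c -> exists2 a, a \in e :: hwalk e A' o & x = (a, b, c, i2).
Proof. by move=> /mapP [a]; exists a. Qed.

Lemma mem_segB a c x : x \in segB a c -> exists b, x = (a, b, c, i1).
Proof. by move=> /mapP [b _]; exists b. Qed.

Lemma mem_segC a b x : x \in segC a b -> exists c, x = (a, b, c, i0).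
Proof. by move=> /mapP [c _]; exists c. Qed.

Definition tagA (j : 'I_p) (k : bool) : p.-tuple 'I_3 := tset A j (shift3 (tnth A j) k).

Definition fan j k : seq (p.-tuple 'I_3) :=
  tagA j k :: hwalk (tagA j k) A' (cyc_order p_gt0 j).

Lemma hdist_tagA j k : hdist A (tagA j k) = 1.
Proof. by rewrite hdist_tset // eq_sym shift3_neq. Qed.

Lemma tagA_neq j k : tagA j k <> A.
Proof. by move=> tagA_eq; have := hdist_tagA j k; rewrite tagA_eq hdistxx. Qed.

Lemma tagA_inj j k j' k' : tagA j k = tagA j' k' -> (j, k) = (j', k').
Proof.
move/(congr1 (fun a => tnth a j)); rewrite !tnth_tset eqxx.
case: (j =P j') => [<- /shift3_inj -> // | _ shift_eq].
by have := shift3_neq (tnth A j) k; rewrite shift_eq eqxx.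
Qed.

Lemma tnth_fan j k x : x \in fan j k -> exists m, forall i,
  tnth x i = if cyc_rank p j i < m then tnth A' i else tnth (tagA j k) i.
Proof.
case/mem_hwalk => m ->; exists m => i.
by rewrite tnth_tmerge mem_take_cyc_order.
Qed.

Lemma fan_tagged j k x : x \in fan j k -> x != A' -> tnth x j = shift3 (tnth A j) k.
Proof.
case/tnth_fan => m x_def /tuple_neqP [i]; rewrite !x_def !tnth_tset eqxx.
case: (ltnP (cyc_rank p j j) m) => // lt_jm.
by rewrite (leq_ltn_trans (cyc_rank_max j i) lt_jm) eqxx.
Qed.

Lemma fan_disjoint j k j' k' x :
  x \in fan j k -> x \in fan j' k' -> x != A' -> (j, k) = (j', k').
Proof.
move=> fan_x fan'_x neq_x; have tag_x := fan_tagged fan_x neq_x.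
have tag'_x := fan_tagged fan'_x neq_x.
case: (eqVneq j j') => [eq_j|ne_j].
  by subst j'; congr pair; apply: (@shift3_inj (tnth A j)); rewrite -tag_x -tag'_x.
have [m x_def] := tnth_fan fan_x; have [m' x_def'] := tnth_fan fan'_x.
have [i ne_i] := tuple_neqP neq_x.
have le_mi : m <= cyc_rank p j i.
  by move: ne_i; rewrite x_def; case: ltnP => //; rewrite eqxx.
have le_m'i : m' <= cyc_rank p j' i.
  by move: ne_i; rewrite x_def'; case: ltnP => //; rewrite eqxx.
have lt_jj' : cyc_rank p j j' < m.
  move: tag'_x; rewrite x_def tnth_tset eq_sym (negbTE ne_j).
  by case: ltnP => // _ /eqP; rewrite eq_sym (negbTE (shift3_neq _ _)).
have lt_j'j : cyc_rank p j' j < m'.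
  move: tag_x; rewrite x_def' tnth_tset (negbTE ne_j).
  by case: ltnP => // _ /eqP; rewrite eq_sym (negbTE (shift3_neq _ _)).
have := cyc_rank_rotate ne_j (leq_trans lt_jj' le_mi).
by rewrite leqNgt (leq_trans lt_j'j le_m'i).
Qed.

Definition tag_path j k : seq V :=
  [:: (tagA j k, B, C, i2)] ++ segC (tagA j k) B ++ segB (tagA j k) C' ++
  segA (cyc_order p_gt0 j) (tagA j k) B' C'.
Definition path_BAC : seq V := segB A C ++ segA (enum 'I_p) A B' C ++ segC A' B' ++ [:: v].
Definition path_CAB : seq V := segC A B ++ segA (enum 'I_p) A B C' ++ segB A' C' ++ [:: v].
Definition path_CBA : seq V := segC A B ++ segB A C' ++ segA (enum 'I_p) A B' C'.

(* The membership lemmas are rewritten at exact instances in [H] only: a bare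
   [rewrite mem_cat] also matches [[:: z]] as [[:: z] ++ [::]] and loops. *)
Tactic Notation "case_mem" ident(y) ident(y_in) ident(E) :=
  repeat lazymatch goal with
  | |- is_true (?x \in ?s1 ++ ?s2) -> _ =>
    let H := fresh in move=> H; rewrite (mem_cat x s1 s2) in H; case/orP: H
  end;
  lazymatch goal with
  | |- is_true (_ \in segA _ _ _ _) -> _ => case/mem_segA => y y_in E
  | |- is_true (_ \in segB _ _) -> _ => case/mem_segB => y E
  | |- is_true (_ \in segC _ _) -> _ => case/mem_segC => y E
  | |- is_true (?x \in [:: ?z]) -> _ =>
    let H := fresh in move=> H; rewrite (mem_seq1 x z) in H; move/eqP: H => E
  end.

Ltac uniq_segments := repeat first
  [ exact: segA_uniq | exact: segB_uniq | exact: segC_uniq | done | apply: uniq_catI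
  | solve [move=> ?; case_mem y1 y1_in E1; case_mem y2 y2_in E2; distinct_vertices] ].

Lemma tag_path_ok j k : is_path u v (tag_path j k) /\ size (tag_path j k) <= p + q + w + 4.
Proof.
have neq_tag := @tagA_neq j k; split.
  apply: walk_to_is_path; last by rewrite -cat1s /tag_path; uniq_segments.
  rewrite /tag_path; apply: walk_to_cat (walk_to1 _) _.
    by apply: E3Cadj_A; rewrite hdist_tagA.
  apply: walk_to_cat (walk_to_segC _) _; first exact: E3Cadj_layer.
  apply: walk_to_cat (walk_to_segB _) _; first exact: E3Cadj_layer.
  by apply: walk_to_segA; [exact: mem_cyc_order | exact: E3Cadj_layer].
have := size_segA (cyc_order p_gt0 j) (tagA j k) B' C'.
have := size_segB (tagA j k) C'; have := size_segC (tagA j k) B.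
rewrite /tag_path !size_cat size_cyc_order /=; lia.
Qed.

Lemma path_BAC_ok : is_path u v path_BAC /\ size path_BAC <= p + q + w + 4.
Proof.
split.
  apply: walk_to_is_path; last by rewrite -cat1s /path_BAC; uniq_segments.
  rewrite /path_BAC.
  apply: walk_to_cat (walk_to_segB _) _; first exact: E3Cadj_layer.
  apply: walk_to_cat (walk_to_segA _ _) _; [exact: mem_enum | exact: E3Cadj_layer |].
  apply: walk_to_cat (walk_to_segC _) _; first exact: E3Cadj_layer.
  exact/walk_to1/E3Cadj_layer.
have := size_segA (enum 'I_p) A B' C; have := size_segB A C; have := size_segC A' B'.
rewrite /path_BAC !size_cat size_enum_ord /=; lia.
Qed.

Lemma path_CAB_ok : is_path u v path_CAB /\ size path_CAB <= p + q + w + 4.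
Proof.
split.
  apply: walk_to_is_path; last by rewrite -cat1s /path_CAB; uniq_segments.
  rewrite /path_CAB.
  apply: walk_to_cat (walk_to_segC _) _; first exact: E3Cadj_layer.
  apply: walk_to_cat (walk_to_segA _ _) _; [exact: mem_enum | exact: E3Cadj_layer |].
  apply: walk_to_cat (walk_to_segB _) _; first exact: E3Cadj_layer.
  exact/walk_to1/E3Cadj_layer.
have := size_segA (enum 'I_p) A B C'; have := size_segB A' C'; have := size_segC A B.
rewrite /path_CAB !size_cat size_enum_ord /=; lia.
Qed.

Lemma path_CBA_ok : is_path u v path_CBA /\ size path_CBA <= p + q + w + 4.
Proof.
split.
  apply: walk_to_is_path; last by rewrite -cat1s /path_CBA; uniq_segments.
  rewrite /path_CBA.
  apply: walk_to_cat (walk_to_segC _) _; first exact: E3Cadj_layer.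
  apply: walk_to_cat (walk_to_segB _) _; first exact: E3Cadj_layer.
  by apply: walk_to_segA; [exact: mem_enum | exact: E3Cadj_layer].
have := size_segA (enum 'I_p) A B' C'; have := size_segB A C'; have := size_segC A B.
rewrite /path_CBA !size_cat size_enum_ord /=; lia.
Qed.

Lemma fan_neq_A j k a : a \in fan j k -> a != A' -> a <> A.
Proof.
move=> fan_a /(fan_tagged fan_a) tag_a eq_a.
by have := shift3_neq (tnth A j) k; rewrite -tag_a eq_a eqxx.
Qed.

Lemma tag_paths_disjoint j k j' k' x : (j, k) != (j', k') ->
  x \in tag_path j k -> x \in tag_path j' k' -> x <> v -> False.
Proof.
move=> ne_jk; have ne_tag : tagA j k <> tagA j' k'.
  by move/tagA_inj => eq_jk; rewrite eq_jk eqxx in ne_jk.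
rewrite /tag_path; case_mem a a_in Ea; case_mem b b_in Eb => ne_v; try distinct_vertices.
have eq_ab : a = b by congruence.
subst b; move/eqP: ne_jk; apply; apply: fan_disjoint a_in b_in _.
by apply/eqP => eq_a; apply: ne_v; rewrite Ea eq_a.
Qed.

Lemma tag_path_BAC_disjoint j k x : x \in tag_path j k -> x \in path_BAC -> x <> v -> False.
Proof.
rewrite /tag_path /path_BAC; case_mem a a_in Ea; case_mem b b_in Eb => ne_v; distinct_vertices.
Qed.

Lemma tag_path_CAB_disjoint j k x : hdist A A' != 1 ->
  x \in tag_path j k -> x \in path_CAB -> x <> v -> False.
Proof.
move=> dist_ne1; have neq_tag := @tagA_neq j k.
have neq_tag' : tagA j k <> A' by move=> eq_tag; move: dist_ne1; rewrite -eq_tag hdist_tagA.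
rewrite /tag_path /path_CAB; case_mem a a_in Ea; case_mem b b_in Eb => ne_v; distinct_vertices.
Qed.

Lemma tag_path_CBA_disjoint j k x : hdist A A' = 1 ->
  x \in tag_path j k -> x \in path_CBA -> x <> v -> False.
Proof.
move=> dist1; have neq_tag := @tagA_neq j k.
rewrite /tag_path /path_CBA; case_mem a a_in Ea; case_mem b b_in Eb => ne_v; try distinct_vertices.
have eq_ab : a = b by congruence.
have ne_a : a != A' by apply/eqP => eq_a; apply: ne_v; rewrite Ea eq_a.
move: b_in; rewrite -eq_ab inE => /predU1P [|/(hwalk_hdist1 dist1)/eqP]; last exact/negP.
exact: fan_neq_A a_in ne_a.
Qed.

Lemma path_CAB_BAC_disjoint x : x \in path_CAB -> x \in path_BAC -> x <> v -> False.
Proof.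
rewrite /path_CAB /path_BAC; case_mem a a_in Ea; case_mem b b_in Eb => ne_v; distinct_vertices.
Qed.

Lemma path_CBA_BAC_disjoint x : x \in path_CBA -> x \in path_BAC -> x <> v -> False.
Proof.
rewrite /path_CBA /path_BAC; case_mem a a_in Ea; case_mem b b_in Eb => ne_v; distinct_vertices.
Qed.

Definition path_C : seq V := if hdist A A' == 1 then path_CBA else path_CAB.

Lemma path_C_ok : is_path u v path_C /\ size path_C <= p + q + w + 4.
Proof. by rewrite /path_C; case: ifP => _; [exact: path_CBA_ok | exact: path_CAB_ok]. Qed.

Lemma tag_path_C_disjoint j k x : x \in tag_path j k -> x \in path_C -> x <> v -> False.
Proof.
rewrite /path_C; case: eqP => [|/eqP].
  exact: tag_path_CBA_disjoint.
exact: tag_path_CAB_disjoint.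
Qed.

Lemma path_C_BAC_disjoint x : x \in path_C -> x \in path_BAC -> x <> v -> False.
Proof.
rewrite /path_C; case: ifP => _.
  exact: path_CBA_BAC_disjoint.
exact: path_CAB_BAC_disjoint.
Qed.

(* The default [Ordinal p_gt0] is never used: below, [i < 2 * r <= p.*2]. *)
Definition tag_index (i : nat) : 'I_p := insubd (Ordinal p_gt0) i./2.

Lemma tag_index_odd_inj i j : i < p.*2 -> j < p.*2 ->
  (tag_index i, odd i) = (tag_index j, odd j) -> i = j.
Proof.
have half_lt n : n < p.*2 -> n./2 < p by rewrite -ltn_double; have := odd_double_half n; lia.
move=> /half_lt lt_i /half_lt lt_j [/(congr1 val)].
rewrite !val_insubd lt_i lt_j => eq_half eq_odd.
by rewrite -[i]odd_double_half -[j]odd_double_half eq_half eq_odd.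
Qed.

Definition layer2_path r (i : 'I_(2 * r + 2)) : seq V :=
  if i < 2 * r then tag_path (tag_index i) (odd i)
  else if i == 2 * r :> nat then path_C else path_BAC.

Lemma layer2_disjoint_paths r : r <= p -> disjoint_paths u v (2 * r + 2) (p + q + w + 4).
Proof.
move=> le_rp; apply: (disjoint_pathsP (P := @layer2_path r)) => [i|i j x lt_ij].
  rewrite /layer2_path; case: ifP => _; first exact: tag_path_ok.
  by case: ifP => _; [exact: path_C_ok | exact: path_BAC_ok].
have lt_2p n : n < 2 * r -> n < p.*2 by rewrite -muln2; lia.
rewrite /layer2_path; case: (ltnP j (2 * r)) => [lt_j|ge_j].
  rewrite (ltn_trans lt_ij lt_j) => x_i x_j; apply: tag_paths_disjoint x_i x_j.
  apply/negP => /eqP/(tag_index_odd_inj (lt_2p _ (ltn_trans lt_ij lt_j)) (lt_2p _ lt_j)).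
  by move/val_inj => eq_ij; rewrite eq_ij ltnn in lt_ij.
have [j_2r|j_2r1] : j = 2 * r :> nat \/ j = (2 * r).+1 :> nat by have := ltn_ord j; lia.
  have lt_i : i < 2 * r by rewrite -[X in _ < X]j_2r.
  rewrite lt_i j_2r eqxx; exact: tag_path_C_disjoint.
rewrite j_2r1 (gtn_eqF (ltnSn _)).
case: (ltnP i (2 * r)) => [_|ge_i]; first exact: tag_path_BAC_disjoint.
have -> : i = 2 * r :> nat by lia.
by rewrite eqxx; apply: path_C_BAC_disjoint.
Qed.

End LayerTwo.

Lemma ord3P (d : 'I_3) : d = i0 \/ d = i1 \/ d = i2.
Proof. by case: d => [[|[|[|?]]] ?] //; [left | right; left | right; right]; apply: val_inj. Qed.

Definition swap02 (d : 'I_3) : 'I_3 := if d == i0 then i2 else if d == i2 then i0 else i1.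
Definition swap12 (d : 'I_3) : 'I_3 := if d == i1 then i2 else if d == i2 then i1 else i0.

Definition swapAC r s t (x : E3Cvert t s r) : E3Cvert r s t :=
  let: (a, b, c, d) := x in (c, b, a, swap02 d).
Definition swapAB r s t (x : E3Cvert s r t) : E3Cvert r s t :=
  let: (a, b, c, d) := x in (b, a, c, swap12 d).

Lemma swapAC_inj r s t : injective (@swapAC r s t).
Proof.
move=> [[[a b] c] d] [[[a' b'] c'] d'] [-> -> ->].
by have [->|[->|->]] := ord3P d; have [->|[->|->]] := ord3P d'.
Qed.

Lemma swapAB_inj r s t : injective (@swapAB r s t).
Proof.
move=> [[[a b] c] d] [[[a' b'] c'] d'] [-> -> ->].
by have [->|[->|->]] := ord3P d; have [->|[->|->]] := ord3P d'.
Qed.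

Lemma swapAC_adj r s t : {homo @swapAC r s t : x y / E3Cadj x y}.
Proof.
move=> [[[a b] c] d] [[[a' b'] c'] d'].
have [->|[->|->]] := ord3P d; have [->|[->|->]] := ord3P d';
by rewrite /E3Cadj /vA /vB /vC /vd /=; case: (a == a'); case: (b == b'); case: (c == c');
  rewrite /= ?andbF ?orbF ?andbT.
Qed.

Lemma swapAB_adj r s t : {homo @swapAB r s t : x y / E3Cadj x y}.
Proof.
move=> [[[a b] c] d] [[[a' b'] c'] d'].
have [->|[->|->]] := ord3P d; have [->|[->|->]] := ord3P d';
by rewrite /E3Cadj /vA /vB /vC /vd /=; case: (a == a'); case: (b == b'); case: (c == c');
  rewrite /= ?andbF ?orbF ?andbT.
Qed.


Theorem lemma13 (r s t : nat) (u v : E3Cvert r s t) :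
  1 <= r -> r <= s -> s <= t ->
  vA u != vA v -> vB u != vB v -> vC u != vC v -> vd u = vd v ->
  exists P : 'I_(2 * r + 2) -> seq (E3Cvert r s t),
    (forall i, is_path u v (P i) /\ size (P i) <= r + s + t + 4) /\
    (forall i j, i != j -> forall x, x \in interior u (P i) -> x \notin interior u (P j)).
Proof.
move=> r_gt0 le_rs le_st neqA neqB neqC eq_d; have le_rt := leq_trans le_rs le_st.
change (disjoint_paths u v (2 * r + 2) (r + s + t + 4)).
case: u v neqA neqB neqC eq_d => [[[A B] C] d] [[[A' B'] C'] d'].
rewrite /vA /vB /vC /vd /= => /eqP neqA /eqP neqB /eqP neqC <-{d'}.
have [->|[->|->]] := ord3P d.
- have := layer2_disjoint_paths (leq_trans r_gt0 le_rt) neqC neqB neqA le_rt.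
  move/(disjoint_paths_map (@swapAC_inj r s t) (@swapAC_adj r s t)).
  by apply: disjoint_paths_le; lia.
- have := layer2_disjoint_paths (leq_trans r_gt0 le_rs) neqB neqA neqC le_rs.
  move/(disjoint_paths_map (@swapAB_inj r s t) (@swapAB_adj r s t)).
  by apply: disjoint_paths_le; lia.
- by apply: disjoint_paths_le (layer2_disjoint_paths r_gt0 neqA neqB neqC (leqnn r)).
Qed.
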